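(* Let $K=3$ and $r^\star(a)=\mathbb{1}(a=1)$. For every integer $n>500$ there exists a distribution $\mu$ on ordered pairs of distinct arms such that, with probability at least $0.09$ over a dataset $\mathcal{D}$ of $n$ i.i.d. samples generated as in the context, for every sequence $(r^{(m)})_{m\ge1}\subset\{r\in\mathbb{R}^3:r(3)=0\}$ with $\hat{\mathcal{L}}_{\mathsf{CE}}(\mathcal{D},r^{(m)})\to\inf_{r(3)=0}\hat{\mathcal{L}}_{\mathsf{CE}}(\mathcal{D},r)$, there is $m_0$ such that for all $m\ge m_0$, arm $1$ is not a maximizer of $r^{(m)}$; consequently every policy $\hat\pi_\infty$ supported on $\arg\max_a r^{(m)}(a)$ satisfies $$\mathsf{SubOpt}(\hat\pi_\infty)\ge 1.$$
   Context: $K$-armed bandit preference model. Arms are $[K]$ with deterministic ground-truth rewards $r^\star(a)$. Let $\sigma(x)=e^x/(1+e^x)$. A sample $(a,a',y)$ is generated by drawing $(a,a')\sim\mu$ (a distribution on ordered pairs of distinct arms) and $y\sim\mathrm{Bernoulli}(\sigma(r^\star(a)-r^\star(a')))$, $y=1$ meaning $a$ is preferred; $\mathcal{D}=\{(a_i,a_i',y_i)\}_{i=1}^n$ consists of $n$ i.i.d. samples. Empirical cross-entropy loss: $$\hat{\mathcal{L}}_{\mathsf{CE}}(\mathcal{D},r)=-\frac1n\sum_{i=1}^n\Big[y_i\log\sigma(r(a_i)-r(a_i'))+(1-y_i)\log\sigma(r(a_i')-r(a_i))\Big].$$ The policy $\hat\pi_\infty$ is the greedy policy on the estimated reward, $\hat\pi_\infty(a)=\mathbb{1}(a=\arg\max_{a'}\hat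 r(a'))$ (the $\lambda\to\infty$ limit of the KL-regularized optimum $\pi_\lambda(a)\propto\pi_0(a)e^{\lambda\hat r(a)}$). For a policy $\pi\in\Delta([K])$, $\mathsf{SubOpt}(\pi)=\max_a r^\star(a)-\mathbb{E}_{a\sim\pi}[r^\star(a)]$. *)

From HB Require Import structures.
From mathcomp Require Import all_boot all_order all_algebra.
From mathcomp Require Import all_classical all_reals all_analysis.
Set Implicit Arguments. Unset Strict Implicit. Unset Printing Implicit Defensive.
Import Order.TTheory GRing.Theory Num.Theory.
Local Open Scope ring_scope.
Local Open Scope classical_set_scope.

(* Arms [K] = {1,2,3} are encoded as 'I_3 : arm k  <->  ordinal k-1.
   So arm 1 is ord0 and arm 3 is ord_max. *)
Definition sample := ('I_3 * 'I_3 * bool)%type.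

Definition sigma {R : realType} (x : R) : R := expR x / (1 + expR x).

Definition rstar {R : realType} (a : 'I_3) : R := (nat_of_ord a == 0)%N%:R.

Definition is_pair_dist {R : realType} (mu : 'I_3 -> 'I_3 -> R) : Prop :=
  (forall a b, 0 <= mu a b) /\ (forall a, mu a a = 0) /\
  \sum_(a : 'I_3) \sum_(b : 'I_3) mu a b = 1.

Definition psample {R : realType} (mu : 'I_3 -> 'I_3 -> R) (s : sample) : R :=
  let '(a, a', y) := s in
  mu a a' * (if y then sigma (rstar a - rstar a') else 1 - sigma (rstar a - rstar a')).

Definition pdata {R : realType} (n : nat) (mu : 'I_3 -> 'I_3 -> R)
  (D : {ffun 'I_n -> sample}) : R := \prod_(i < n) psample mu (D i).

Definition Prob {R : realType} (n : nat) (mu : 'I_3 -> 'I_3 -> R)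
  (E : {ffun 'I_n -> sample} -> Prop) : R :=
  \sum_(D : {ffun 'I_n -> sample} | `[< E D >]) pdata mu D.

Definition LCE {R : realType} (n : nat) (D : {ffun 'I_n -> sample}) (r : 'I_3 -> R) : R :=
  - (n%:R^-1) * \sum_(i < n)
      (let '(a, a', y) := D i in
       (y%:R * ln (sigma (r a - r a')) + (1 - y%:R) * ln (sigma (r a' - r a)))).

Definition is_maximizer {R : realType} (r : 'I_3 -> R) (a : 'I_3) : Prop :=
  forall b, r b <= r a.

Definition is_policy {R : realType} (pi : 'I_3 -> R) : Prop :=
  (forall a, 0 <= pi a) /\ \sum_(a : 'I_3) pi a = 1.

Definition SubOpt {R : realType} (pi : 'I_3 -> R) : R :=
  \big[Num.max/rstar ord0]_(a : 'I_3) rstar a - \sum_(a : 'I_3) pi a * rstar a.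

Definition bad_event {R : realType} (n : nat) (D : {ffun 'I_n -> sample}) : Prop :=
  forall r : nat -> 'I_3 -> R,
    (forall m, r m ord_max = 0) ->
    (LCE D (r m) @[m --> \oo] --> inf [set LCE D r' | r' in [set r' : 'I_3 -> R | r' ord_max = 0]]) ->
    exists m0 : nat, forall m : nat, (m0 <= m)%N ->
      ~ is_maximizer (r m) ord0 /\
      (forall pi : 'I_3 -> R, is_policy pi ->
         (forall a, 0 < pi a -> is_maximizer (r m) a) -> 1 <= SubOpt pi).

From HB Require Import structures.
From mathcomp Require Import all_boot all_order all_algebra.
From mathcomp Require Import all_classical all_reals all_analysis.
From mathcomp Require Import lra ring.
Set Implicit Arguments. Unset Strict Implicit. Unset Printing Implicit Defensive.
Import Order.TTheory GRing.Theory Num.Theory.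
Local Open Scope ring_scope.

(* Let mu put mass 1/n on the comparison (arm 1, arm 2) and 1 - 1/n on
   (arm 2, arm 3).  With probability n (1/n) (1 - sigma 1) (1 - 1/n)^(n-1)
   >= 1 / (e (1 + e)) > 0.09 the dataset contains a single comparison of
   arms 1 and 2, won by arm 2, and otherwise only comparisons of arms 2 and 3.
   On such a dataset r(arm 1) enters the loss only through the term
   -ln sigma (r(arm 2) - r(arm 1)) / n, which decreases strictly as r(arm 1)
   decreases; so every r ranking arm 1 first has loss at least
   (ln sigma 1 - ln sigma 0) / n above the infimum, and a minimizing sequence
   eventually ranks arm 1 strictly below arm 2. *)

Local Open Scope classical_set_scope.

Section Sigma.
Variable R : realType.

Lemma sigma_gt0 (x : R) : 0 < sigma x.
Proof. rewrite /sigma divr_gt0 // ?expR_gt0 //; have := expR_gt0 x; lra. Qed.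

Lemma sigma_le1 (x : R) : sigma x <= 1.
Proof. rewrite /sigma ler_pdivrMr; last by have := expR_gt0 x; lra. lra. Qed.

Lemma sigma_increasing : {homo (@sigma R) : x y / x < y}.
Proof.
move=> x y xy; have ex := expR_gt0 x; have ey := expR_gt0 y.
have exy : expR x < expR y by rewrite ltr_expR.
rewrite /sigma ltr_pdivrMr; last lra.
rewrite mulrAC ltr_pdivlMr; last lra.
nra.
Qed.

Lemma onem_sigma (x : R) : 1 - sigma x = (1 + expR x)^-1.
Proof. by rewrite /sigma; have ex := expR_gt0 x; field; lra. Qed.

End Sigma.

Definition arm2 : 'I_3 := @Ordinal 3 1 isT.
Definition lost_to_arm2 : sample := (ord0, arm2, false).
Definition arm2_vs_arm3 (y : bool) : sample := (arm2, ord_max, y).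

Definition lone_comparison {n : nat} (i : 'I_n) : 'I_n -> pred sample :=
  fun j s => if j == i then s == lost_to_arm2
             else (s == arm2_vs_arm3 false) || (s == arm2_vs_arm3 true).

Section BadEvent.
Variable R : realType.

Lemma LCE_ge0 n (D : {ffun 'I_n -> sample}) (r : 'I_3 -> R) : 0 <= LCE D r.
Proof.
rewrite /LCE; apply: mulr_le0; first by rewrite oppr_le0 invr_ge0.
apply: sumr_le0 => j _; case: (D j) => [[a a'] y].
have h1 := ln_le0 (sigma_le1 (r a - r a')).
have h2 := ln_le0 (sigma_le1 (r a' - r a)).
case: y => /=; lra.
Qed.

Lemma SubOptE (pi : 'I_3 -> R) : SubOpt pi = 1 - pi ord0.
Proof.
have max_rstar : \big[Num.max/rstar ord0]_(a < 3) rstar a = 1 :> R.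
  by rewrite !big_ord_recl big_ord0 /rstar /= !(maxEle, ler01, lexx).
rewrite /SubOpt max_rstar !big_ord_recl big_ord0 /rstar /=.
by rewrite !(mulr0, mulr1, addr0).
Qed.

Variables (n : nat) (i : 'I_n) (D : {ffun 'I_n -> sample}).
Hypothesis lone_D : D \in family (lone_comparison i).

Lemma LCE_lone_sub (r r' : 'I_3 -> R) :
  r arm2 = r' arm2 -> r ord_max = r' ord_max ->
  LCE D r - LCE D r' =
  - n%:R^-1 * (ln (sigma (r arm2 - r ord0)) - ln (sigma (r' arm2 - r' ord0))).
Proof.
move: lone_D => /familyP lone e2 e3.
rewrite /LCE -mulrBr -sumrB (bigD1 i) //= big1 ?addr0.
  by have := lone i; rewrite /lone_comparison eqxx => /eqP ->; rewrite /=; ring.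
move=> j ji; have := lone j; rewrite /lone_comparison (negbTE ji).
by case/orP => /eqP ->; rewrite /= e2 e3 subrr.
Qed.

Let feasible_losses := [set LCE D r' | r' in [set r' : 'I_3 -> R | r' ord_max = 0]].

Lemma LCE_gap_arm1_top (r : 'I_3 -> R) : r ord_max = 0 -> r arm2 <= r ord0 ->
  n%:R^-1 * (ln (sigma 1) - ln (sigma 0)) <= LCE D r - inf feasible_losses.
Proof.
move=> r3 r21.
(* put arm 1 one unit below arm 2: feasible, and the loss drops by the gap *)
pose r' := fun a : 'I_3 => if a == ord0 then r arm2 - 1 else r a.
have feasible_r' : feasible_losses (LCE D r') by exists r' => //; rewrite /r' /= r3.
have lb : has_lbound feasible_losses by exists 0 => _ [? _ <-]; exact: LCE_ge0.
have inf_le := ge_inf lb feasible_r'.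
have ln_sigma_le : ln (sigma (r arm2 - r ord0)) <= ln (sigma 0).
  rewrite ler_ln ?posrE ?sigma_gt0 //.
  have [->|ne0] := eqVneq (r arm2 - r ord0) 0; first by [].
  by apply/ltW/sigma_increasing; rewrite lt_neqAle ne0 /=; lra.
have gap_le : n%:R^-1 * (ln (sigma 1) - ln (sigma 0)) <= LCE D r - LCE D r'.
  rewrite LCE_lone_sub // /r' /= (_ : r arm2 - (r arm2 - 1) = 1); last by ring.
  by rewrite mulNr -mulrN ler_wpM2l ?invr_ge0 //; lra.
lra.
Qed.

Lemma bad_event_lone : @bad_event R n D.
Proof.
move=> r r3 cvg_inf.
have gap_gt0 : 0 < n%:R^-1 * (ln (sigma 1) - ln (sigma 0)) :> R.
  have n_gt0 : (0 < n)%N by case: n i => [[]|].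
  rewrite mulr_gt0 ?invr_gt0 ?ltr0n // subr_gt0.
  by rewrite ltr_ln ?posrE ?sigma_gt0 ?sigma_increasing.
have [m0 _ near_inf] := cvgr_dist_lt _ _ cvg_inf _ gap_gt0.
exists m0 => m m0m.
have arm1_not_max : ~ is_maximizer (r m) ord0.
  move=> /(_ arm2) /(LCE_gap_arm1_top (r3 m)).
  have := near_inf m m0m; rewrite /= distrC => dist_lt.
  have := ler_norm (LCE D (r m) - inf feasible_losses); lra.
split=> // pi [pi_ge0 _] supp.
have pi1 : pi ord0 = 0.
  apply/eqP; rewrite eq_le pi_ge0 andbT leNgt; apply/negP => /supp; exact: arm1_not_max.
by rewrite SubOptE pi1 subr0.
Qed.

End BadEvent.

Section LoneProbability.
Variables (R : realType) (n : nat).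

Lemma sum_exists_lone (f : {ffun 'I_n -> sample} -> R) :
  \sum_(D | [exists i, D \in family (lone_comparison i)]) f D =
  \sum_i \sum_(D in family (lone_comparison i)) f D.
Proof.
under [RHS]eq_bigr do rewrite big_mkcond.
rewrite exchange_big /= big_mkcond /=; apply: eq_bigr => D _.
have [/existsP [i lone_i]|/existsPn not_lone] := boolP [exists i, D \in family (lone_comparison i)].
  (* only one position can hold the comparison of arms 1 and 2 *)
  rewrite (bigD1 i) //= lone_i big1 ?addr0 // => j ji; case: ifP => // lone_j.
  move/familyP: lone_i => /(_ j); move/familyP: lone_j => /(_ j).
  by rewrite /lone_comparison eqxx (negbTE ji) => /eqP ->.
by rewrite big1 // => j _; rewrite (negbTE (not_lone j)).
Qed.

Lemma sum_family_lone (mu : 'I_3 -> 'I_3 -> R) (i : 'I_n) :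
  \sum_(D in family (lone_comparison i)) pdata mu D =
  psample mu lost_to_arm2 *
  (psample mu (arm2_vs_arm3 false) + psample mu (arm2_vs_arm3 true)) ^+ n.-1.
Proof.
rewrite /pdata -(bigA_distr_big_dep _ (fun j s => psample mu s)) (bigD1 i) //=.
rewrite {1}/lone_comparison eqxx big_pred1_eq; congr (_ * _).
rewrite (eq_bigr (fun _ => psample mu (arm2_vs_arm3 false) + psample mu (arm2_vs_arm3 true))).
  have -> : forall c : R, \prod_(j | j != i) c = \prod_(j in predC1 i) c by [].
  by rewrite prodr_const cardC1 card_ord.
move=> j ji; rewrite /lone_comparison (negbTE ji) (bigD1 (arm2_vs_arm3 false)) //=.
congr (_ + _); rewrite (big_pred1 (arm2_vs_arm3 true)) // => s /=.
by case: (s =P arm2_vs_arm3 false) => [->|] //=; rewrite andbT.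
Qed.

Lemma Prob_bad_event_ge (mu : 'I_3 -> 'I_3 -> R) : (forall a b, 0 <= mu a b) ->
  n%:R * (psample mu lost_to_arm2 *
          (psample mu (arm2_vs_arm3 false) + psample mu (arm2_vs_arm3 true)) ^+ n.-1)
  <= Prob mu (@bad_event R n).
Proof.
move=> mu_ge0.
have pdata_ge0 D : 0 <= pdata mu D.
  apply: prodr_ge0 => j _; case: (D j) => [[a b] []] /=; apply: mulr_ge0 => //.
    exact/ltW/sigma_gt0.
  by rewrite subr_ge0 sigma_le1.
have -> : forall c : R, n%:R * c = \sum_(i < n) c.
  by move=> c; rewrite sumr_const card_ord mulr_natl.
under eq_bigr => i _ do rewrite -(sum_family_lone mu i).
rewrite -sum_exists_lone /Prob [X in _ <= X]big_mkcond [X in X <= _]big_mkcond.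
apply: ler_sum => D _; case: ifP => [/existsP [i lone_i]|_]; last by case: ifP.
by rewrite asboolT //; exact: bad_event_lone lone_i.
Qed.

End LoneProbability.

Section HardDistribution.
Variables (R : realType) (n : nat).
Hypothesis n_gt0 : (0 < n)%N.

Definition mu_hard (a b : 'I_3) : R :=
  if (a == ord0) && (b == arm2) then n%:R^-1
  else if (a == arm2) && (b == ord_max) then 1 - n%:R^-1 else 0.

Lemma is_pair_dist_mu_hard : is_pair_dist mu_hard.
Proof.
have inv_gt0 : (0 : R) < n%:R^-1 by rewrite invr_gt0 ltr0n.
have inv_le1 : n%:R^-1 <= 1 :> R by rewrite invf_le1 ?ltr0n // ler1n.
split; [|split].
- move=> a b; rewrite /mu_hard; case: ifP => _; first exact: ltW.
  by case: ifP => _ //; lra.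
- by move=> a; rewrite /mu_hard; case: (a =P ord0) => [->|] //= _; case: (a =P arm2) => [->|].
- by rewrite !big_ord_recr !big_ord0 /= /mu_hard /=; lra.
Qed.

Lemma psample_mu_hard_lost :
  psample mu_hard lost_to_arm2 = n%:R^-1 * (1 + expR 1)^-1.
Proof. by rewrite /= /mu_hard /rstar /= subr0 onem_sigma. Qed.

Lemma psample_mu_hard_arm2_vs_arm3 :
  psample mu_hard (arm2_vs_arm3 false) + psample mu_hard (arm2_vs_arm3 true) = 1 - n%:R^-1.
Proof. by rewrite /= /mu_hard /=; ring. Qed.

End HardDistribution.

Section Numerics.
Variable R : realType.

Lemma ler_sqr_trans (x a b : R) : 0 <= x -> x <= a -> a ^+ 2 <= b -> x ^+ 2 <= b.
Proof. by move=> x_ge0 xa; apply: le_trans; rewrite lerXn2r ?nnegrE //; apply: le_trans xa. Qed.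

Lemma expR1_le : expR (1 : R) <= 286 / 100.
Proof.
(* e^(-1/16) >= 1 - 1/16 gives e^(1/16) <= 16/15; then square four times *)
set y := expR (16^-1 : R).
have y_ge0 : 0 <= y by exact: expR_ge0.
have y_le : y <= 16 / 15.
  have : 15 / 16 <= y^-1 by rewrite /y -expRN; have := expR_ge1Dx (- 16^-1 : R); lra.
  by rewrite -[X in X <= _]invf_div lef_pV2 ?posrE ?expR_gt0.
have -> : expR (1 : R) = (((y ^+ 2) ^+ 2) ^+ 2) ^+ 2.
  by rewrite -!exprM /y -expRM_natl mulfV.
apply: ler_sqr_trans (_ : _ <= 169 / 100) _; rewrite ?exprn_ge0 //; last by rewrite expr2; lra.
apply: ler_sqr_trans (_ : _ <= 13 / 10) _; rewrite ?exprn_ge0 //; last by rewrite expr2; lra.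
apply: ler_sqr_trans (_ : _ <= 114 / 100) _; rewrite ?exprn_ge0 //; last by rewrite expr2; lra.
by apply: ler_sqr_trans y_le _; rewrite // expr2; lra.
Qed.

Lemma expR1_inv_le_pow (k : nat) : (0 < k)%N ->
  (expR (1 : R))^-1 <= (1 - k.+1%:R^-1) ^+ k.
Proof.
move=> k_gt0.
have k_pos : (0 : R) < k%:R by rewrite ltr0n.
have pow_le : (1 + k%:R^-1) ^+ k <= expR (1 : R).
  rewrite -[X in expR X](@mulfV _ k%:R) ?gt_eqF // expRM_natl.
  by apply: lerXn2r; rewrite ?nnegrE ?expR_ge0 ?expR_ge1Dx.
have -> : 1 - k.+1%:R^-1 = (1 + k%:R^-1)^-1 :> R.
  by rewrite -addn1 natrD; field; rewrite gt_eqF //= natr1 pnatr_eq0.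
by rewrite exprVn lef_pV2 ?posrE ?exprn_gt0 ?expR_gt0 // addr_gt0.
Qed.

Lemma lone_probability_ge (k : nat) : (0 < k)%N ->
  9 / 100 <= (1 + expR (1 : R))^-1 * (1 - k.+1%:R^-1) ^+ k.
Proof.
move=> k_gt0.
apply: le_trans (_ : (1 + expR 1)^-1 * (expR 1)^-1 <= _); last first.
  by rewrite ler_wpM2l ?invr_ge0 ?addr_ge0 ?expR_ge0 ?expR1_inv_le_pow.
have e_gt0 := expR_gt0 (1 : R); have e_le := expR1_le.
have : (1 + expR 1) * expR 1 <= (386 / 100) * (286 / 100) :> R.
  by apply: ler_pM; lra.
by rewrite -invfM -[9 / 100 : R]invf_div lef_pV2 ?posrE ?mulr_gt0 //; lra.
Qed.

End Numerics.

Local Close Scope classical_set_scope.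

Theorem corollary3 (R : realType) (n : nat) (hn : (500 < n)%N) :
  exists mu : 'I_3 -> 'I_3 -> R,
    is_pair_dist mu /\ 9 / 100 <= Prob mu (@bad_event R n).
Proof.
case: n hn => // k; rewrite ltnS => hk; have k_gt0 : (0 < k)%N by apply: leq_trans hk.
exists (mu_hard R k.+1); split; first exact: is_pair_dist_mu_hard.
have [mu_ge0 _] := is_pair_dist_mu_hard R (ltn0Sn k).
apply: le_trans (Prob_bad_event_ge _ mu_ge0).
rewrite psample_mu_hard_lost psample_mu_hard_arm2_vs_arm3 /= mulrA mulrA.
by rewrite divff ?pnatr_eq0 // mul1r lone_probability_ge.
Qed.
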